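(* Assume $\sum_{j=1}^\infty\beta_j^2<\infty$ and $|\rho|<1$, and for $k=1,\dots,p$ let $\theta_k^{(p)}=\sum_{j=1}^p\beta_j\rho^{|k-j|}$. Then, as $p\to\infty$, $$\Big|\sum_{i,j,k=1}^p\big(\rho^{|i-j|}+\theta_i^{(p)}\theta_j^{(p)}\big)\big(\rho^{|i-k|}+\theta_i^{(p)}\theta_k^{(p)}\big)\big(\rho^{|k-j|}+\theta_k^{(p)}\theta_j^{(p)}\big)\Big|=o(p^{3/2}).$$ *)

From Stdlib Require Import Reals Lra Lia.
From Coquelicot Require Import Coquelicot.
Open Scope R_scope.

Definition absdiff (i j : nat) : nat := ((i - j) + (j - i))%nat.

Definition theta (beta : nat -> R) (rho : R) (p k : nat) : R :=
  sum_n_m (fun j => beta j * rho ^ (absdiff k j)) 1 p.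

Definition Mentry (beta : nat -> R) (rho : R) (p i j : nat) : R :=
  rho ^ (absdiff i j) + theta beta rho p i * theta beta rho p j.

Definition triple_sum (beta : nat -> R) (rho : R) (p : nat) : R :=
  sum_n_m (fun i => sum_n_m (fun j => sum_n_m (fun k =>
     Mentry beta rho p i j * Mentry beta rho p i k * Mentry beta rho p k j)
     1 p) 1 p) 1 p.

(** Bound each entry by [a_ij = r^|i-j| + u_i u_j], where [r = |rho|] and [u_k = |theta_k|].
    The kernel [r^|i-j|] has row sums at most [C = (1+r)/(1-r)], so Cauchy-Schwarz gives
    [u_k^2 <= C sum_j r^|k-j| beta_j^2]: the entries are bounded by a constant [K], and
    [V = sum_k u_k^2 <= C^2 sum_j beta_j^2] is bounded independently of [p].  Bounding the
    factor [M_kj] by [K],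
    [|S_p| <= K sum_i (sum_j a_ij)^2 <= K sum_i (C + u_i sum_k u_k)^2 <= K p (C + V)^2],
    using [(sum_k u_k)^2 <= p V].  So [S_p = O(p)], a fortiori [o(p^(3/2))]. *)

From Stdlib Require Import Reals Lra Lia.
From Coquelicot Require Import Coquelicot.
Open Scope R_scope.

Lemma sum_n_m_Rplus (u v : nat -> R) n m :
  sum_n_m (fun k => u k + v k) n m = sum_n_m u n m + sum_n_m v n m.
Proof. exact (sum_n_m_plus u v n m). Qed.

Lemma sum_n_m_Rmult_l c (u : nat -> R) n m :
  sum_n_m (fun k => c * u k) n m = c * sum_n_m u n m.
Proof. exact (sum_n_m_mult_l c u n m). Qed.

Lemma sum_n_m_Rmult_r c (u : nat -> R) n m :
  sum_n_m (fun k => u k * c) n m = sum_n_m u n m * c.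
Proof. exact (sum_n_m_mult_r c u n m). Qed.

Lemma sum_n_m_nonneg (a : nat -> R) n m :
  (forall k, 0 <= a k) -> 0 <= sum_n_m a n m.
Proof.
  intros Ha. apply Rle_trans with (sum_n_m (fun _ => 0) n m).
  - rewrite sum_n_m_const. lra.
  - apply sum_n_m_le, Ha.
Qed.

Lemma Rabs_sum_n_m_le (a b : nat -> R) n m :
  (forall k, Rabs (a k) <= b k) -> Rabs (sum_n_m a n m) <= sum_n_m b n m.
Proof.
  intros Hab. eapply Rle_trans; [exact (norm_sum_n_m a n m) | apply sum_n_m_le, Hab].
Qed.

Lemma sum_n_m_swap (f : nat -> nat -> R) a b c d :
  sum_n_m (fun i => sum_n_m (fun j => f i j) a b) c d =
  sum_n_m (fun j => sum_n_m (fun i => f i j) c d) a b.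
Proof.
  destruct (Nat.le_gt_cases c d) as [Hcd | Hdc].
  - induction Hcd as [| d Hcd IH].
    + rewrite sum_n_n. apply sum_n_m_ext; intros j. now rewrite sum_n_n.
    + rewrite sum_n_Sm, IH, <- sum_n_m_Rplus by lia.
      apply sum_n_m_ext; intros j. now rewrite sum_n_Sm by lia.
  - rewrite sum_n_m_zero by lia. rewrite <- (sum_n_m_const_zero a b).
    apply sum_n_m_ext; intros j. now rewrite sum_n_m_zero by lia.
Qed.

Lemma sum_n_m_mult_sum (x y : nat -> R) n m a b :
  sum_n_m x n m * sum_n_m y a b =
  sum_n_m (fun i => sum_n_m (fun j => x i * y j) a b) n m.
Proof.
  rewrite <- sum_n_m_Rmult_r. apply sum_n_m_ext; intros i.
  now rewrite <- sum_n_m_Rmult_l.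
Qed.

(* Weighted Cauchy-Schwarz, from [sum_(i,j) w_i w_j (x_i - x_j)^2 >= 0]. *)
Lemma sum_n_m_Cauchy_Schwarz (w x : nat -> R) n m : (forall k, 0 <= w k) ->
  (sum_n_m (fun k => w k * x k) n m) ^ 2 <=
  sum_n_m w n m * sum_n_m (fun k => w k * x k ^ 2) n m.
Proof.
  intros Hw.
  assert (Hsq : (sum_n_m (fun k => w k * x k) n m) ^ 2 =
    sum_n_m (fun i => sum_n_m (fun j => w i * x i * (w j * x j)) n m) n m)
    by (rewrite <- sum_n_m_mult_sum; ring).
  assert (Hl : sum_n_m w n m * sum_n_m (fun k => w k * x k ^ 2) n m =
    sum_n_m (fun i => sum_n_m (fun j => w i * (w j * x j ^ 2)) n m) n m)
    by apply sum_n_m_mult_sum.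
  assert (Hr : sum_n_m w n m * sum_n_m (fun k => w k * x k ^ 2) n m =
    sum_n_m (fun i => sum_n_m (fun j => w i * x i ^ 2 * w j) n m) n m)
    by (rewrite Rmult_comm; apply sum_n_m_mult_sum).
  enough (2 * sum_n_m (fun i => sum_n_m (fun j => w i * x i * (w j * x j)) n m) n m <=
    sum_n_m (fun i => sum_n_m (fun j => w i * (w j * x j ^ 2)) n m) n m +
    sum_n_m (fun i => sum_n_m (fun j => w i * x i ^ 2 * w j) n m) n m) by lra.
  rewrite <- sum_n_m_Rmult_l, <- sum_n_m_Rplus.
  apply sum_n_m_le; intros i.
  rewrite <- sum_n_m_Rmult_l, <- sum_n_m_Rplus.
  apply sum_n_m_le; intros j.
  pose proof (Hw i). pose proof (Hw j).
  assert (0 <= w i * w j * (x i - x j) ^ 2)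
    by (apply Rmult_le_pos; [apply Rmult_le_pos | apply pow2_ge_0]; assumption).
  nra.
Qed.

Lemma sum_n_m_sq_le (x : nat -> R) n m :
  (sum_n_m x n m) ^ 2 <= INR (S m - n) * sum_n_m (fun k => x k ^ 2) n m.
Proof.
  pose proof (sum_n_m_Cauchy_Schwarz (fun _ => 1) x n m (fun _ => Rle_0_1)) as H.
  rewrite sum_n_m_const, Rmult_1_r in H.
  rewrite (sum_n_m_ext (fun k => 1 * x k) x),
    (sum_n_m_ext (fun k => 1 * x k ^ 2) (fun k => x k ^ 2)) in H by (intros; cbn; ring).
  exact H.
Qed.

Lemma absdiff_comm i j : absdiff i j = absdiff j i.
Proof. unfold absdiff. lia. Qed.

Lemma absdiff_S i j : absdiff (S i) (S j) = absdiff i j.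
Proof. unfold absdiff. lia. Qed.

Lemma pow_le_1 r n : 0 <= r <= 1 -> r ^ n <= 1.
Proof. intros Hr. rewrite <- (pow1 n). apply pow_incr. lra. Qed.

Lemma sum_pow_0_n r n : r <> 1 ->
  sum_n_m (fun j => r ^ j) 0 n = (1 - r ^ S n) / (1 - r).
Proof. intros Hr. exact (eq_trans (sum_n_Reals _ n) (tech3 r n Hr)). Qed.

(* The extra term [- r^(k+1)] makes the induction on [k] go through. *)
Lemma sum_pow_absdiff_0_le r k n : 0 <= r < 1 ->
  sum_n_m (fun j => r ^ absdiff k j) 0 n <= (1 + r - r ^ S k) / (1 - r).
Proof.
  intros Hr. revert n. induction k as [| k IH]; intros n.
  - rewrite (sum_n_m_ext _ (fun j => r ^ j)) by (intros j; unfold absdiff; f_equal; lia).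
    rewrite sum_pow_0_n by lra.
    apply Rmult_le_compat_r; [apply Rlt_le, Rinv_0_lt_compat; lra |].
    pose proof (pow_le r (S n)). rewrite pow_1. lra.
  - assert (HrSk : 0 <= r ^ S k <= 1) by (split; [apply pow_le | apply pow_le_1]; lra).
    assert (Hbound : (1 + r - r ^ S (S k)) / (1 - r) = r ^ S k + (1 + r - r ^ S k) / (1 - r))
      by (simpl; field; lra).
    rewrite Hbound. destruct n as [| n].
    + rewrite sum_n_n. replace (absdiff (S k) 0) with (S k) by (unfold absdiff; lia).
      enough (0 <= (1 + r - r ^ S k) / (1 - r)) by lra.
      apply Rdiv_le_0_compat; simpl in *; nra.
    + rewrite sum_Sn_m, <- sum_n_m_S by lia. change plus with Rplus.
      replace (absdiff (S k) 0) with (S k) by (unfold absdiff; lia).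
      rewrite (sum_n_m_ext _ (fun j => r ^ absdiff k j)) by (intros j; now rewrite absdiff_S).
      specialize (IH n). lra.
Qed.

Lemma sum_pow_absdiff_le r k p : 0 <= r < 1 ->
  sum_n_m (fun j => r ^ absdiff k j) 1 p <= (1 + r) / (1 - r).
Proof.
  intros Hr.
  apply Rle_trans with (sum_n_m (fun j => r ^ absdiff k j) 0 p).
  - rewrite (sum_Sn_m _ 0 p) by lia. change plus with Rplus.
    pose proof (pow_le r (absdiff k 0)). lra.
  - eapply Rle_trans; [now apply sum_pow_absdiff_0_le |].
    apply Rmult_le_compat_r; [apply Rlt_le, Rinv_0_lt_compat; lra |].
    pose proof (pow_le r (S k)). lra.
Qed.

Lemma sum_n_le_Series (g : nat -> R) : ex_series g -> (forall n, 0 <= g n) ->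
  forall n, sum_n g n <= Series g.
Proof.
  intros Hg Hpos n. apply is_lim_seq_incr_compare; [exact (Series_correct _ Hg) |].
  intros m. rewrite sum_Sn. change plus with Rplus. pose proof (Hpos (S m)). lra.
Qed.

Lemma sum_n_m_1_le_Series (g : nat -> R) :
  ex_series (fun j => g (S j)) -> (forall n, 0 <= g n) ->
  forall p, sum_n_m g 1 p <= Series (fun j => g (S j)).
Proof.
  intros Hg Hpos p.
  pose proof (sum_n_le_Series _ Hg (fun n => Hpos (S n))) as Hpartial.
  destruct p as [| p].
  - rewrite sum_n_m_zero by lia. specialize (Hpartial 0%nat).
    unfold sum_n in Hpartial. rewrite sum_n_n in Hpartial.
    pose proof (Hpos 1%nat). change zero with 0. lra.
  - rewrite <- sum_n_m_S. apply Hpartial.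
Qed.

Lemma is_lim_seq_linear_div_Rpower_3_2 (x : nat -> R) (E : R) :
  (forall p, Rabs (x p) <= E * INR p) ->
  is_lim_seq (fun p => Rabs (x p) / Rpower (INR p) (3 / 2)) 0.
Proof.
  intros Hx.
  assert (Hsqrt : is_lim_seq (fun p => sqrt (INR p)) p_infty)
    by exact (filterlim_comp _ _ _ INR sqrt eventually _ _ is_lim_seq_INR filterlim_sqrt_p).
  assert (Hlim : is_lim_seq (fun p => E * / sqrt (INR p)) 0).
  { replace (Finite 0) with (Rbar_mult E (Rbar_inv p_infty)) by (simpl; f_equal; ring).
    apply is_lim_seq_scal_l, is_lim_seq_inv; [exact Hsqrt | discriminate]. }
  apply is_lim_seq_le_le_loc with (u := fun _ => 0) (w := fun p => E * / sqrt (INR p));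
    [| apply is_lim_seq_const | exact Hlim].
  exists 1%nat. intros p Hp.
  assert (Hp0 : 0 < INR p) by (apply lt_0_INR; lia).
  assert (Hs : 0 < sqrt (INR p)) by (apply sqrt_lt_R0; lra).
  assert (Hpow : Rpower (INR p) (3 / 2) = INR p * sqrt (INR p)).
  { replace (3 / 2) with (1 + / 2) by field.
    now rewrite Rpower_plus, Rpower_1, Rpower_sqrt. }
  rewrite Hpow. split.
  - apply Rle_mult_inv_pos; [apply Rabs_pos | now apply Rmult_lt_0_compat].
  - replace (E * / sqrt (INR p)) with (E * INR p / (INR p * sqrt (INR p))) by (field; lra).
    apply Rmult_le_compat_r; [apply Rlt_le, Rinv_0_lt_compat; nra | apply Hx].
Qed.

Section TripleSumBound.

Variables (beta : nat -> R) (rho B : R) (p : nat).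
Hypothesis Hrho : Rabs rho < 1.
Hypothesis HB : sum_n_m (fun j => beta j ^ 2) 1 p <= B.

Let r := Rabs rho.
Let C := (1 + r) / (1 - r).
Let K := 1 + C * B.
Let u k := Rabs (theta beta rho p k).
Let T : R := sum_n_m u 1 p.
Let V : R := sum_n_m (fun k => u k ^ 2) 1 p.
Let a i j := r ^ absdiff i j + u i * u j.

Lemma r_bounds : 0 <= r < 1.
Proof. split; [apply Rabs_pos | exact Hrho]. Qed.

Lemma C_nonneg : 0 <= C.
Proof. pose proof r_bounds. apply Rdiv_le_0_compat; lra. Qed.

Lemma kernel_weight_bounds i j : 0 <= r ^ absdiff i j <= 1.
Proof. pose proof r_bounds. split; [apply pow_le | apply pow_le_1]; lra. Qed.

Lemma kernel_row_sum_le k : sum_n_m (fun j => r ^ absdiff k j) 1 p <= C.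
Proof. exact (sum_pow_absdiff_le r k p r_bounds). Qed.

Lemma Rabs_theta_le k : u k <= sum_n_m (fun j => r ^ absdiff k j * Rabs (beta j)) 1 p.
Proof.
  apply Rabs_sum_n_m_le. intros j. rewrite Rabs_mult, <- RPow_abs, Rmult_comm. apply Rle_refl.
Qed.

Lemma theta_sq_le k : u k ^ 2 <= C * sum_n_m (fun j => r ^ absdiff k j * beta j ^ 2) 1 p.
Proof.
  pose proof (sum_n_m_Cauchy_Schwarz (fun j => r ^ absdiff k j) (fun j => Rabs (beta j)) 1 p
    (fun j => proj1 (kernel_weight_bounds k j))) as HCS.
  rewrite (sum_n_m_ext (fun j => r ^ absdiff k j * Rabs (beta j) ^ 2)
    (fun j => r ^ absdiff k j * beta j ^ 2)) in HCS by (intros j; now rewrite pow2_abs).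
  assert (Hu : u k ^ 2 <= (sum_n_m (fun j => r ^ absdiff k j * Rabs (beta j)) 1 p) ^ 2)
    by (apply pow_incr; split; [apply Rabs_pos | apply Rabs_theta_le]).
  assert (Hw : 0 <= sum_n_m (fun j => r ^ absdiff k j * beta j ^ 2) 1 p).
  { apply sum_n_m_nonneg. intros j.
    apply Rmult_le_pos; [apply kernel_weight_bounds | apply pow2_ge_0]. }
  pose proof (Rmult_le_compat_r _ _ _ Hw (kernel_row_sum_le k)). lra.
Qed.

Lemma theta_sq_le_CB k : u k ^ 2 <= C * B.
Proof.
  eapply Rle_trans; [apply theta_sq_le | apply Rmult_le_compat_l; [apply C_nonneg |]].
  eapply Rle_trans; [| exact HB]. apply sum_n_m_le. intros j.
  pose proof (kernel_weight_bounds k j). pose proof (pow2_ge_0 (beta j)). nra.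
Qed.

Lemma sum_theta_sq_le : V <= C ^ 2 * B.
Proof.
  eapply Rle_trans; [apply sum_n_m_le; intros k; apply theta_sq_le |].
  rewrite sum_n_m_Rmult_l, sum_n_m_swap.
  replace (C ^ 2 * B) with (C * (C * B)) by ring.
  apply Rmult_le_compat_l; [apply C_nonneg |].
  eapply Rle_trans; [| apply Rmult_le_compat_l; [apply C_nonneg | exact HB]].
  rewrite <- sum_n_m_Rmult_l. apply sum_n_m_le. intros j.
  rewrite sum_n_m_Rmult_r. apply Rmult_le_compat_r; [apply pow2_ge_0 |].
  rewrite (sum_n_m_ext _ (fun i => r ^ absdiff j i)) by (intros i; now rewrite absdiff_comm).
  apply kernel_row_sum_le.
Qed.

Lemma Rabs_Mentry_le i j : Rabs (Mentry beta rho p i j) <= a i j.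
Proof.
  eapply Rle_trans; [apply Rabs_triang |].
  rewrite Rabs_mult, <- RPow_abs. apply Rle_refl.
Qed.

Lemma a_nonneg i j : 0 <= a i j.
Proof.
  pose proof (kernel_weight_bounds i j).
  pose proof (Rabs_pos (theta beta rho p i)). pose proof (Rabs_pos (theta beta rho p j)).
  unfold a, u. nra.
Qed.

Lemma a_le_K i j : a i j <= K.
Proof.
  pose proof (kernel_weight_bounds i j). pose proof (theta_sq_le_CB i).
  pose proof (theta_sq_le_CB j). pose proof (pow2_ge_0 (u i - u j)).
  unfold a, K. nra.
Qed.

Lemma row_sum_a_le i : sum_n_m (a i) 1 p <= C + u i * T.
Proof.
  unfold a. rewrite sum_n_m_Rplus, sum_n_m_Rmult_l.
  pose proof (kernel_row_sum_le i). unfold T. lra.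
Qed.

Lemma Rabs_triple_sum_le : Rabs (triple_sum beta rho p) <=
  K * sum_n_m (fun i => (sum_n_m (a i) 1 p) ^ 2) 1 p.
Proof.
  rewrite <- sum_n_m_Rmult_l. apply Rabs_sum_n_m_le. intros i.
  assert (Hsq : K * (sum_n_m (a i) 1 p) ^ 2 =
    sum_n_m (fun j => sum_n_m (fun k => K * (a i j * a i k)) 1 p) 1 p).
  { rewrite <- Rsqr_pow2; unfold Rsqr. rewrite sum_n_m_mult_sum, <- sum_n_m_Rmult_l.
    apply sum_n_m_ext; intros j. now rewrite <- sum_n_m_Rmult_l. }
  rewrite Hsq. apply Rabs_sum_n_m_le; intros j. apply Rabs_sum_n_m_le; intros k.
  rewrite !Rabs_mult.
  pose proof (Rabs_Mentry_le i j). pose proof (Rabs_Mentry_le i k).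
  pose proof (Rabs_Mentry_le k j). pose proof (a_le_K k j).
  pose proof (Rabs_pos (Mentry beta rho p i j)). pose proof (Rabs_pos (Mentry beta rho p i k)).
  pose proof (Rabs_pos (Mentry beta rho p k j)).
  rewrite Rmult_comm. apply Rmult_le_compat; [nra | nra | lra | nra].
Qed.

Lemma sum_row_sq_le : sum_n_m (fun i => (sum_n_m (a i) 1 p) ^ 2) 1 p <= INR p * (C + V) ^ 2.
Proof.
  assert (HT : T ^ 2 <= INR p * V).
  { pose proof (sum_n_m_sq_le u 1 p) as H. now replace (S p - 1)%nat with p in H by lia. }
  assert (HT0 : 0 <= T) by (apply sum_n_m_nonneg; intros; apply Rabs_pos).
  assert (HV0 : 0 <= V) by (apply sum_n_m_nonneg; intros; apply pow2_ge_0).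
  pose proof C_nonneg.
  eapply Rle_trans.
  { apply (sum_n_m_le _ (fun i => (C + u i * T) ^ 2)). intros i. apply pow_incr. split.
    - apply sum_n_m_nonneg, a_nonneg.
    - apply row_sum_a_le. }
  rewrite (sum_n_m_ext _ (fun i => C ^ 2 + (2 * C * T * u i + T ^ 2 * u i ^ 2)))
    by (intros; cbn; ring).
  rewrite !sum_n_m_Rplus, sum_n_m_const, !sum_n_m_Rmult_l.
  replace (S p - 1)%nat with p by lia. fold T V.
  assert (2 * C * T ^ 2 <= 2 * C * (INR p * V)) by (apply Rmult_le_compat_l; nra).
  assert (T ^ 2 * V <= INR p * V * V) by nra.
  nra.
Qed.

Lemma triple_sum_linear_bound : Rabs (triple_sum beta rho p) <= INR p * (C ^ 2 * K ^ 3).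
Proof.
  pose proof C_nonneg. pose proof sum_theta_sq_le.
  assert (HV0 : 0 <= V) by (apply sum_n_m_nonneg; intros; apply pow2_ge_0).
  assert (HK0 : 0 <= K) by (pose proof (a_nonneg 0 0); pose proof (a_le_K 0 0); lra).
  assert (HCV : (C + V) ^ 2 <= (C * K) ^ 2) by (apply pow_incr; unfold K; nra).
  eapply Rle_trans; [apply Rabs_triple_sum_le |].
  eapply Rle_trans; [apply Rmult_le_compat_l; [exact HK0 | apply sum_row_sq_le] |].
  pose proof (pos_INR p).
  assert (INR p * (C + V) ^ 2 <= INR p * (C * K) ^ 2) by (apply Rmult_le_compat_l; lra).
  replace (INR p * (C ^ 2 * K ^ 3)) with (K * (INR p * (C * K) ^ 2)) by ring.
  apply Rmult_le_compat_l; lra.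
Qed.

End TripleSumBound.

Lemma triple_sum_O_p (beta : nat -> R) (rho : R) :
  ex_series (fun j => beta (S j) ^ 2) -> Rabs rho < 1 ->
  exists E, forall p, Rabs (triple_sum beta rho p) <= E * INR p.
Proof.
  intros Hbeta Hrho.
  pose proof (sum_n_m_1_le_Series (fun j => beta j ^ 2) Hbeta (fun j => pow2_ge_0 (beta j)))
    as HB.
  eexists. intros p. rewrite Rmult_comm.
  exact (triple_sum_linear_bound beta rho _ p Hrho (HB p)).
Qed.

Theorem mainTheorem15 (beta : nat -> R) (rho : R)
  (Hbeta : ex_series (fun j => (beta (S j)) ^ 2))
  (Hrho : Rabs rho < 1) :
  is_lim_seq (fun p => Rabs (triple_sum beta rho p) / Rpower (INR p) (3 / 2)) 0.
Proof.
  destruct (triple_sum_O_p beta rho Hbeta Hrho) as [E HE].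
  exact (is_lim_seq_linear_div_Rpower_3_2 _ E HE).
Qed.
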